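(* Let $\mathbb{Q}$ be a finite set of predicates from an SMT-decidable logic, $\Gamma$ a liquid typing environment and $e$ a liquid expression, both containing no imprecise refinement $?$. If $\mathrm{Infer}\ \Gamma\ e\ \mathbb{Q} = \mathrm{Just}\ \tau$, then $\mathrm{GInfer}\ \Gamma\ e\ \mathbb{Q} = \{\tau\}$. Otherwise $\mathrm{GInfer}\ \Gamma\ e\ \mathbb{Q} = \emptyset$.
   Context: Language: base types $b ::= \mathrm{Int}\mid\mathrm{Bool}$; expressions built from constants (with given sound types $\mathrm{ty}(c)$), variables, $\lambda x{:}t.e$, applications $e\,x$, $\mathrm{if}\ x\ \mathrm{then}\ e\ \mathrm{else}\ e$, $\mathrm{let}\ x=e\ \mathrm{in}\ e$ and annotated $\mathrm{let}\ x{:}\tau=e\ \mathrm{in}\ e$; refinement types $\{v{:}b\mid p\}$ and $x{:}\tau\to\tau$, checked by a standard refinement type system whose base subtyping $\Gamma\vdash\{v{:}b\mid p_1\}\preceq\{v{:}b\mid p_2\}$ is valid iff $\bigwedge\{p\mid y{:}\{v{:}b\mid p\}\in\Gamma\}\Rightarrow p_1\Rightarrow p_2$ is SMT-valid and base well-formedness requires $p$ to be a boolean in $\Gamma,v{:}b$. Liquid predicates: $\ell ::= \mathrm{true}\mid q\mid\ell\land\ell\mid\kappa$, $q\in\mathbb{Q}$, $\kappa$ liquid variables; a solution $A$ maps liquid variables to subsets of $\mathbb{Q}$. Gradual predicates are $\ell$ or $\ell\land ?$ with $\ell$ local (for every closing substitution some value satisfies it). Algorithmic concretization $\gamma_{\mathbb{Q}}(\ell)=\{\ell\}$,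 $\gamma_{\mathbb{Q}}(\ell\land ?)=\{\ell'$ conjunction of a subset of $\mathbb{Q}$ $\mid \ell'$ implies $\ell$ for all substitutions, $\ell'$ local$\}$, extended pointwise to constraints and lists of constraints. $\mathrm{Cons}\ \Gamma\ e$ applies the typing rules syntax-directedly, using fresh liquid-variable templates (Hindley–Milner shaped) for types not given by syntax, returning $(\mathrm{Just}\ \tau, C)$ with $C$ the list of base subtyping/well-formedness constraints, or $(\mathrm{Nothing},\emptyset)$ on failure. $\mathrm{Solve}\ A\ C$ repeatedly picks a constraint not valid under $A$ and, if its right-hand side is a liquid variable $\kappa$, removes from $A(\kappa)$ the qualifiers failing it, otherwise returns $\mathrm{Nothing}$; it returns $\mathrm{Just}\ A$ when all constraints are valid. With $A_0=\lambda\kappa.\mathbb{Q}$: $\mathrm{Infer}\ \Gamma\ e\ \mathbb{Q}$ returns $\mathrm{Just}\ \tau[A]$ if $\mathrm{Cons}\ \Gamma\ e=(\mathrm{Just}\ \tau,C)$ and $\mathrm{Solve}\ A_0\ C=\mathrm{Just}\ A$, and $\mathrm{Nothing}$ otherwise; $\mathrm{GInfer}\ \Gamma\ e\ \mathbb{Q}=\{\tau[A]\mid(\mathrm{Just}\ \tau,C)=\mathrm{Cons}\ \Gamma\ e,\ C'\in\gamma_{\mathbb{Q}}(C),\ \mathrm{Just}\ A=\mathrm{Solve}\ A_0\ C'\}$. *)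

From Stdlib Require Import ZArith ClassicalEpsilon.
From mathcomp Require Import ssreflect ssrfun ssrbool eqtype ssrnat seq.

Set Implicit Arguments.
Unset Strict Implicit.
Unset Printing Implicit Defensive.

Inductive base := BInt | BBool.

Definition base_eqb (b1 b2 : base) : bool :=
  match b1, b2 with BInt, BInt | BBool, BBool => true | _, _ => false end.

Inductive val := VInt of Z | VBool of bool.

Definition val_base (c : val) : base :=
  match c with VInt _ => BInt | VBool _ => BBool end.

(* Variables of the refinement logic: the value variable v, and program
   variables (named by naturals). *)
Inductive lvar := VV | PV of nat.

Definition subst_var (x y : nat) : lvar -> lvar :=
  fun w => match w with PV z => if z == y then PV x else w | VV => VV end.

Definition vv_to (y : nat) : lvar -> lvar :=
  fun w => match w with VV => PV y | _ => w end.

Record logic := Logic {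
  formula : eqType;
  eval : (lvar -> val) -> formula -> Prop;
  wfp : (lvar -> option base) -> formula -> bool;
  ren : (lvar -> lvar) -> formula -> formula;
  eval_ren : forall s th q, eval s (ren th q) <-> eval (s \o th) q;
  wfp_ren : forall d th q, wfp d (ren th q) = wfp (d \o th) q
}.

(* liquid predicates  l ::= true | q | l /\ l | th . kappa
   (th a pending renaming, needed for the application rule) *)
Inductive lpred (F : Type) :=
  | LTrue | LQ of F | LAnd of lpred F & lpred F | LK of nat & (lvar -> lvar).

(* gradual predicates: l  or  l /\ ? *)
Inductive gpred (F : Type) := GS of lpred F | GG of lpred F.

Inductive rty (P : Type) := RBase of base & P | RFun of nat & rty P & rty P.

Inductive constr (P : Type) :=
  | CSub of seq (nat * rty P) & base & P & P
  | CWf of seq (nat * rty P) & base & P.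

Fixpoint rmap (P P' : Type) (f : P -> P') (t : rty P) : rty P' :=
  match t with
  | RBase b p => RBase b (f p)
  | RFun x t1 t2 => RFun x (rmap f t1) (rmap f t2)
  end.

Fixpoint rall (P : Type) (f : P -> bool) (t : rty P) : bool :=
  match t with
  | RBase _ p => f p
  | RFun _ t1 t2 => rall f t1 && rall f t2
  end.

Fixpoint rsize (P : Type) (t : rty P) : nat :=
  match t with RBase _ _ => 1 | RFun _ t1 t2 => (rsize t1 + rsize t2).+1 end.

Fixpoint lookup (P : Type) (G : seq (nat * rty P)) (x : nat) : option (rty P) :=
  match G with
  | [::] => None
  | (y, t) :: G' => if y == x then Some t else lookup G' x
  end.

Definition asb (P : Prop) : bool :=
  if excluded_middle_informative P then true else false.

Section Lang.
Variable L : logic.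
Local Notation F := (formula L).

Definition lp := lpred F.
Definition gp := gpred F.
Definition lty := rty lp.
Definition gty := rty gp.
Definition lenv := seq (nat * lty).
Definition genv := seq (nat * gty).
Definition lcons := constr lp.
Definition gcons := constr gp.

(* a solution maps liquid variables to subsets of Q *)
Definition sol := nat -> seq F.

Fixpoint evalL (A : sol) (s : lvar -> val) (l : lp) : Prop :=
  match l with
  | LTrue => True
  | LQ q => eval s q
  | LAnd l1 l2 => evalL A s l1 /\ evalL A s l2
  | LK k th => forall q, q \in A k -> eval (s \o th) q
  end.

Fixpoint wfL (A : sol) (d : lvar -> option base) (l : lp) : bool :=
  match l with
  | LTrue => true
  | LQ q => wfp d q
  | LAnd l1 l2 => wfL A d l1 && wfL A d l2
  | LK k th => all (wfp (d \o th)) (A k)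
  end.

Definition senv (P : Type) (G : seq (nat * rty P)) (b : base) : lvar -> option base :=
  fun w => match w with
           | VV => Some b
           | PV x => match lookup G x with Some (RBase b' _) => Some b' | _ => None end
           end.

Definition sorted_asg (d : lvar -> option base) (s : lvar -> val) : Prop :=
  forall w b, d w = Some b -> val_base (s w) = b.

Fixpoint envhyp (A : sol) (G : lenv) (s : lvar -> val) : Prop :=
  match G with
  | [::] => True
  | (y, t) :: G' =>
      (match t with RBase _ p => evalL A (s \o vv_to y) p | RFun _ _ _ => True end)
      /\ envhyp A G' s
  end.

Definition valid (A : sol) (c : lcons) : Prop :=
  match c with
  | CSub G b p1 p2 =>
      forall s, sorted_asg (senv G b) s -> envhyp A G s -> evalL A s p1 -> evalL A s p2
  | CWf G b p => wfL A (senv G b) p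
  end.

Definition rhs (c : lcons) : lp :=
  match c with CSub _ _ _ p2 => p2 | CWf _ _ p => p end.

Definition qok (A : sol) (c : lcons) (th : lvar -> lvar) (q : F) : bool :=
  match c with
  | CSub G b p1 _ =>
      asb (forall s, sorted_asg (senv G b) s -> envhyp A G s -> evalL A s p1 ->
                     eval (s \o th) q)
  | CWf G b _ => wfp (senv G b \o th) q
  end.

Definition upd (A : sol) (k : nat) (qs : seq F) : sol :=
  fun k' => if k' == k then qs else A k'.

Fixpoint first_invalid (A : sol) (C : seq lcons) : option lcons :=
  match C with
  | [::] => None
  | c :: C' => if asb (valid A c) then first_invalid A C' else Some c
  end.

Fixpoint solve_fuel (fuel : nat) (A : sol) (C : seq lcons) : option sol :=
  match fuel with
  | 0 => None
  | f.+1 =>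
      match first_invalid A C with
      | None => Some A
      | Some c =>
          match rhs c with
          | LK k th => solve_fuel f (upd A k [seq q <- A k | qok A c th q]) C
          | _ => None
          end
      end
  end.

Definition rhs_kvars (C : seq lcons) : seq nat :=
  flatten [seq match rhs c with LK k _ => [:: k] | _ => [::] end | c <- C].

(* every refinement step strictly removes a qualifier of some A(k), k a
   right-hand-side variable of C, so this fuel is always sufficient *)
Definition solve_measure (A : sol) (C : seq lcons) : nat :=
  sumn [seq size (A k) | k <- undup (rhs_kvars C)].

Definition Solve (A : sol) (C : seq lcons) : option sol :=
  solve_fuel (solve_measure A C).+1 A C.

Definition conjQ (qs : seq F) : lp := foldr (fun q l => LAnd (LQ q) l) (LTrue F) qs.

Fixpoint applyL (A : sol) (l : lp) : lp :=
  match l with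
  | LK k th => conjQ [seq ren th q | q <- A k]
  | LAnd l1 l2 => LAnd (applyL A l1) (applyL A l2)
  | _ => l
  end.

Definition applyG (A : sol) (g : gp) : gp :=
  match g with GS l => GS (applyL A l) | GG l => GG (applyL A l) end.

Definition applyT (A : sol) (t : gty) : gty := rmap (applyG A) t.

Fixpoint renL (th : lvar -> lvar) (l : lp) : lp :=
  match l with
  | LTrue => LTrue F
  | LQ q => LQ (ren th q)
  | LAnd l1 l2 => LAnd (renL th l1) (renL th l2)
  | LK k th' => LK F k (th \o th')
  end.

Definition renG (th : lvar -> lvar) (g : gp) : gp :=
  match g with GS l => GS (renL th l) | GG l => GG (renL th l) end.

Fixpoint renT (x y : nat) (t : gty) : gty :=
  match t with
  | RBase b p => RBase b (renG (subst_var x y) p)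
  | RFun z t1 t2 => RFun z (renT x y t1) (if z == y then t2 else renT x y t2)
  end.

Fixpoint fresh (P : Type) (t : rty P) (n : nat) : gty * nat :=
  match t with
  | RBase b _ => (RBase b (GS (LK F n id)), n.+1)
  | RFun x t1 t2 =>
      let: (u1, n1) := fresh t1 n in
      let: (u2, n2) := fresh t2 n1 in
      (RFun x u1 u2, n2)
  end.

Fixpoint wfc (G : genv) (t : gty) : seq gcons :=
  match t with
  | RBase b p => [:: CWf G b p]
  | RFun x t1 t2 => wfc G t1 ++ wfc ((x, t1) :: G) t2
  end.

(* splitting subtyping into base constraints (fuel = size, always sufficient) *)
Fixpoint sub_f (fuel : nat) (G : genv) (t1 t2 : gty) : option (seq gcons) :=
  match fuel with
  | 0 => None
  | f.+1 =>
      match t1, t2 with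
      | RBase b1 p1, RBase b2 p2 =>
          if base_eqb b1 b2 then Some [:: CSub G b1 p1 p2] else None
      | RFun x1 s1 r1, RFun x2 s2 r2 =>
          match sub_f f G s2 s1, sub_f f ((x2, s2) :: G) (renT x2 x1 r1) r2 with
          | Some C1, Some C2 => Some (C1 ++ C2)
          | _, _ => None
          end
      | _, _ => None
      end
  end.

Definition sub (G : genv) (t1 t2 : gty) : option (seq gcons) :=
  sub_f (rsize t1 + rsize t2) G t1 t2.

Variable const : Type.
Variable cty : const -> rty F.

Inductive expr :=
  | EConst of const
  | EVar of nat
  | ELam of nat & rty unit & expr        (* \x:t. e, t an unrefined type *)
  | EApp of expr & nat
  | EIf of nat & expr & expr
  | ELet of nat & expr & expr
  | ELetA of nat & gty & expr & expr.

Definition embedC (t : rty F) : gty := rmap (fun q => GS (LQ q)) t.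

Fixpoint consM (G : genv) (e : expr) (n : nat) : option (gty * seq gcons * nat) :=
  match e with
  | EConst c => Some (embedC (cty c), [::], n)
  | EVar x => match lookup G x with Some t => Some (t, [::], n) | None => None end
  | ELam x s e1 =>
      let: (tx, n1) := fresh s n in
      match consM ((x, tx) :: G) e1 n1 with
      | Some (te, C, n2) =>
          let: (tr, n3) := fresh te n2 in
          match sub ((x, tx) :: G) te tr with
          | Some Cs => Some (RFun x tx tr, C ++ wfc G (RFun x tx tr) ++ Cs, n3)
          | None => None
          end
      | None => None
      end
  | EApp e1 x =>
      match consM G e1 n with
      | Some (RFun y ty tr, C, n1) =>
          match lookup G x with
          | Some tx =>
              match sub G tx ty with
              | Some Cs => Some (renT x y tr, C ++ Cs, n1)
              | None => None
              end
          | None => None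
          end
      | _ => None
      end
  | EIf x e1 e2 =>
      match lookup G x with
      | Some (RBase BBool _) =>
          match consM G e1 n with
          | Some (t1, C1, n1) =>
              match consM G e2 n1 with
              | Some (t2, C2, n2) =>
                  let: (tr, n3) := fresh t1 n2 in
                  match sub G t1 tr, sub G t2 tr with
                  | Some C3, Some C4 => Some (tr, C1 ++ C2 ++ wfc G tr ++ C3 ++ C4, n3)
                  | _, _ => None
                  end
              | None => None
              end
          | None => None
          end
      | _ => None
      end
  | ELet x e1 e2 =>
      match consM G e1 n with
      | Some (t1, C1, n1) =>
          match consM ((x, t1) :: G) e2 n1 with
          | Some (t2, C2, n2) =>
              let: (tr, n3) := fresh t2 n2 in
              match sub ((x, t1) :: G) t2 tr with
              | Some C3 => Some (tr, C1 ++ C2 ++ wfc G tr ++ C3, n3)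
              | None => None
              end
          | None => None
          end
      | None => None
      end
  | ELetA x t e1 e2 =>
      match consM G e1 n with
      | Some (t1, C1, n1) =>
          match sub G t1 t with
          | Some Ca =>
              match consM ((x, t) :: G) e2 n1 with
              | Some (t2, C2, n2) =>
                  let: (tr, n3) := fresh t2 n2 in
                  match sub ((x, t) :: G) t2 tr with
                  | Some C3 => Some (tr, C1 ++ wfc G t ++ Ca ++ C2 ++ wfc G tr ++ C3, n3)
                  | None => None
                  end
              | None => None
              end
          | None => None
          end
      | None => None
      end
  end.

(* liquid variables already used, so that templates are fresh *)
Fixpoint kmaxL (l : lp) : nat :=
  match l with LK k _ => k.+1 | LAnd l1 l2 => maxn (kmaxL l1) (kmaxL l2) | _ => 0 end.
Definition kmaxG (g : gp) : nat := match g with GS l => kmaxL l | GG l => kmaxL l end.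
Fixpoint kmaxT (t : gty) : nat :=
  match t with RBase _ g => kmaxG g | RFun _ t1 t2 => maxn (kmaxT t1) (kmaxT t2) end.
Definition kmaxEnv (G : genv) : nat := foldr (fun p m => maxn (kmaxT p.2) m) 0 G.
Fixpoint kmaxE (e : expr) : nat :=
  match e with
  | ELam _ _ e1 => kmaxE e1
  | EApp e1 _ => kmaxE e1
  | EIf _ e1 e2 | ELet _ e1 e2 => maxn (kmaxE e1) (kmaxE e2)
  | ELetA _ t e1 e2 => maxn (kmaxT t) (maxn (kmaxE e1) (kmaxE e2))
  | _ => 0
  end.

Definition Cons (G : genv) (e : expr) : option gty * seq gcons :=
  match consM G e (maxn (kmaxEnv G) (kmaxE e)) with
  | Some (t, C, _) => (Some t, C)
  | None => (None, [::])
  end.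

Definition static_g (g : gp) : bool := match g with GS _ => true | GG _ => false end.
Definition static_t (t : gty) : bool := rall static_g t.
Definition static_env (G : genv) : bool := all (fun p => static_t p.2) G.
Fixpoint static_e (e : expr) : bool :=
  match e with
  | ELam _ _ e1 | EApp e1 _ => static_e e1
  | EIf _ e1 e2 | ELet _ e1 e2 => static_e e1 && static_e e2
  | ELetA _ t e1 e2 => static_t t && static_e e1 && static_e e2
  | _ => true
  end.

Definition strip_g (g : gp) : option lp := match g with GS l => Some l | GG _ => None end.
Fixpoint strip_t (t : gty) : option lty :=
  match t with
  | RBase b g => omap (RBase b) (strip_g g)
  | RFun x t1 t2 =>
      match strip_t t1, strip_t t2 with
      | Some u1, Some u2 => Some (RFun x u1 u2)
      | _, _ => None
      end
  end.
Fixpoint strip_env (G : genv) : option lenv :=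
  match G with
  | [::] => Some [::]
  | (x, t) :: G' =>
      match strip_t t, strip_env G' with
      | Some u, Some G'' => Some ((x, u) :: G'')
      | _, _ => None
      end
  end.
Definition strip_c (c : gcons) : option lcons :=
  match c with
  | CSub G b p1 p2 =>
      match strip_env G, strip_g p1, strip_g p2 with
      | Some G', Some l1, Some l2 => Some (CSub G' b l1 l2)
      | _, _, _ => None
      end
  | CWf G b p =>
      match strip_env G, strip_g p with
      | Some G', Some l => Some (CWf G' b l)
      | _, _ => None
      end
  end.
Fixpoint strip_list (C : seq gcons) : option (seq lcons) :=
  match C with
  | [::] => Some [::]
  | c :: C' =>
      match strip_c c, strip_list C' with
      | Some c', Some C'' => Some (c' :: C'')
      | _, _ => None
      end
  end.

Definition A0 (Q : seq F) : sol := fun _ => Q.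

Definition Infer (G : genv) (e : expr) (Q : seq F) : option gty :=
  match Cons G e with
  | (Some t, C) =>
      match strip_list C with
      | Some C' =>
          match Solve (A0 Q) C' with
          | Some A => Some (applyT A t)
          | None => None
          end
      | None => None
      end
  | (None, _) => None
  end.

(* l' implies l for all substitutions (and all interpretations of the
   liquid variables, which matters only if l mentions some kappa) *)
Definition implies_all (l' l : lp) : Prop :=
  forall (A : sol) (s : lvar -> val), evalL A s l' -> evalL A s l.

Definition local (b : base) (l' : lp) : Prop :=
  forall (A : sol) (s : lvar -> val),
    exists c, val_base c = b /\
      evalL A (fun w => match w with VV => c | _ => s w end) l'.

Definition gamma_p (Q : seq F) (b : base) (g : gp) (l : lp) : Prop :=
  match g with
  | GS l0 => l = l0
  | GG l0 => exists qs : seq F, {subset qs <= Q} /\ l = conjQ qs /\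
                               implies_all l l0 /\ local b l
  end.

Fixpoint gamma_t (Q : seq F) (t : gty) (u : lty) : Prop :=
  match t, u with
  | RBase b g, RBase b' l => b = b' /\ gamma_p Q b g l
  | RFun x t1 t2, RFun x' u1 u2 => x = x' /\ gamma_t Q t1 u1 /\ gamma_t Q t2 u2
  | _, _ => False
  end.

Definition gamma_env (Q : seq F) (G : genv) (G' : lenv) : Prop :=
  List.Forall2 (fun p p' => p.1 = p'.1 /\ gamma_t Q p.2 p'.2) G G'.

Definition gamma_c (Q : seq F) (c : gcons) (c' : lcons) : Prop :=
  match c, c' with
  | CSub G b p1 p2, CSub G' b' l1 l2 =>
      gamma_env Q G G' /\ b = b' /\ gamma_p Q b p1 l1 /\ gamma_p Q b p2 l2
  | CWf G b p, CWf G' b' l =>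
      gamma_env Q G G' /\ b = b' /\ gamma_p Q b p l
  | _, _ => False
  end.

Definition gamma_list (Q : seq F) (C : seq gcons) (C' : seq lcons) : Prop :=
  List.Forall2 (gamma_c Q) C C'.

Definition GInfer (G : genv) (e : expr) (Q : seq F) (t : gty) : Prop :=
  exists t0 C C' A,
    Cons G e = (Some t0, C) /\ gamma_list Q C C' /\
    Solve (A0 Q) C' = Some A /\ t = applyT A t0.

End Lang.

From Pilot Require Import Defs.
From mathcomp Require Import ssreflect ssrfun ssrbool eqtype ssrnat seq.

Set Implicit Arguments.
Unset Strict Implicit.
Unset Printing Implicit Defensive.

(* Without [?] in Gamma and e, Cons only ever inserts templates made of fresh
   liquid variables, so every constraint it generates is ?-free.  The
   concretization of a ?-free constraint is the singleton of its liquid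
   reading, hence GInfer solves exactly the one constraint list that Infer
   solves. *)

Definition static_c {L : logic} (c : gcons L) : bool :=
  match c with
  | CSub G _ p1 p2 => [&& static_env G, static_g p1 & static_g p2]
  | CWf G _ p => static_env G && static_g p
  end.

Section Concretization.
Variables (L : logic) (Q : seq (formula L)).

Lemma gamma_t_static (t : gty L) u :
  static_t t -> gamma_t Q t u <-> strip_t t = Some u.
Proof.
elim: t u => [b [l0|//] | x t1 IH1 t2 IH2] [b' l|x' u1 u2] //= Ht.
- by split=> [[-> ->] | [-> ->]].
- by split=> //; case: (strip_t t1) => [?|]; case: (strip_t t2).
- case/andP: Ht => /IH1 -> /IH2 ->.
  case: (strip_t t1) => [v1|]; case: (strip_t t2) => [v2|];
    first by split=> [[-> [[->] [->]]] | [-> -> ->]].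
  all: by split=> // -[_ []].
Qed.

Lemma gamma_env_static (G : genv L) G' :
  static_env G -> gamma_env Q G G' <-> strip_env G = Some G'.
Proof.
rewrite /gamma_env; elim: G G' => [|[x t] G IH] [|[x' u] G'] //= HG.
- by split=> H; inversion H.
- split=> [H|]; first by inversion H.
  by case: (strip_t t) => [?|]; case: (strip_env G).
- case/andP: HG => /(gamma_t_static _) Ht /IH HG.
  rewrite List.Forall2_cons_iff /= Ht HG.
  case: (strip_t t) => [v|]; case: (strip_env G) => [G''|];
    first by split=> [[[-> [->]] [->]] | [-> -> ->]].
  all: by split=> // -[[_ ?] ?].
Qed.

Lemma gamma_c_static (c : gcons L) c' :
  static_c c -> gamma_c Q c c' <-> strip_c c = Some c'.
Proof.
case: c => [G b p1 p2 | G b p] /=.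
- case: p1 => l1; case: p2 => l2; rewrite /= ?andbF // andbT => /gamma_env_static HG.
  case: c' => [G' b' l1' l2' | G' b' l'] /=; rewrite ?HG;
    case: (strip_env G) => [G''|]; try by split=> // -[].
  by split=> [[[->] [-> [-> ->]]] | [-> -> -> ->]].
- case: p => l; rewrite /= ?andbF // andbT => /gamma_env_static HG.
  case: c' => [G' b' l1' l2' | G' b' l'] /=; rewrite ?HG;
    case: (strip_env G) => [G''|]; try by split=> // -[].
  by split=> [[[->] [-> ->]] | [-> -> ->]].
Qed.

Lemma gamma_list_static (C : seq (gcons L)) C' :
  all static_c C -> gamma_list Q C C' <-> strip_list C = Some C'.
Proof.
rewrite /gamma_list; elim: C C' => [|c C IH] [|c' C'] //= HC.
- by split=> H; inversion H.
- split=> [H|]; first by inversion H.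
  by case: (strip_c c) => [?|]; case: (strip_list C).
- case/andP: HC => /(gamma_c_static _) Hc /IH HC.
  rewrite List.Forall2_cons_iff Hc HC.
  case: (strip_c c) => [d|]; case: (strip_list C) => [D|];
    first by split=> [[[->] [->]] | [-> ->]].
  all: by split=> // -[? ?].
Qed.

End Concretization.

Section StaticConstraints.
Variable L : logic.

Lemma static_t_fun x (t1 t2 : gty L) :
  static_t (RFun x t1 t2) = static_t t1 && static_t t2.
Proof. by []. Qed.

Lemma static_fresh P (t : rty P) n : static_t (fresh L t n).1.
Proof.
elim: t n => [//| x t1 IH1 t2 IH2] n /=.
case: (fresh L t1 n) (IH1 n) => u1 n1 /= Hu1.
by case: (fresh L t2 n1) (IH2 n1) => u2 n2 /= Hu2; rewrite static_t_fun Hu1.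
Qed.

Lemma static_renT x y (t : gty L) : static_t (renT x y t) = static_t t.
Proof.
elim: t => [b [] | z t1 IH1 t2 IH2] //=.
by rewrite !static_t_fun IH1; case: (z == y); rewrite ?IH2.
Qed.

Lemma static_embedC (t : rty (formula L)) : static_t (embedC t).
Proof. by elim: t => //= x t1 IH1 t2 IH2; rewrite static_t_fun IH1. Qed.

Lemma static_lookup (G : genv L) x t :
  static_env G -> lookup G x = Some t -> static_t t.
Proof.
elim: G => [|[y u] G IH] //= /andP [Hu HG].
by case: (y == x) => [[<-]|]; last exact: IH.
Qed.

Lemma static_wfc (G : genv L) t :
  static_env G -> static_t t -> all static_c (wfc G t).
Proof.
elim: t G => [b p | x t1 IH1 t2 IH2] G HG /=; first by rewrite HG andbT.
by rewrite static_t_fun => /andP [H1 H2]; rewrite all_cat IH1 //= IH2 //= H1.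
Qed.

Lemma static_sub_f f (G : genv L) t1 t2 C :
  static_env G -> static_t t1 -> static_t t2 ->
  sub_f f G t1 t2 = Some C -> all static_c C.
Proof.
elim: f G t1 t2 C => [//| f IH] G [b1 p1 | x1 s1 r1] [b2 p2 | x2 s2 r2] C HG //=.
- by move=> H1 H2; case: base_eqb => // -[<-]; rewrite /= HG andbT; apply/and3P.
- rewrite !static_t_fun => /andP [Hs1 Hr1] /andP [Hs2 Hr2].
  case E1: sub_f => [C1|] //; case E2: sub_f => [C2|] // [<-].
  rewrite all_cat (IH _ _ _ _ HG Hs2 Hs1 E1).
  by apply: (IH _ _ _ _ _ _ Hr2 E2); rewrite /= ?Hs2 ?static_renT.
Qed.

Variables (const : Type) (cty : const -> rty (formula L)).

Lemma static_consM (e : expr L const) G n t C n' :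
  static_env G -> static_e e -> consM cty G e n = Some (t, C, n') ->
  static_t t /\ all static_c C.
Proof.
elim: e G n t C n' =>
  [c | x | x s e1 IH | e1 IH x | x e1 IH1 e2 IH2 | x e1 IH1 e2 IH2 | x ta e1 IH1 e2 IH2]
  G n t C n' HG /=.
- by move=> _ [<- <- _]; rewrite static_embedC.
- by move=> _; case E: lookup => [u|] // [<- <- _]; rewrite (static_lookup HG E).
- move=> He; case: (fresh L s n) (static_fresh s n) => tx n1 /= Htx.
  have HGx : static_env ((x, tx) :: G) by rewrite /= Htx.
  case E1: consM => [[[te C1] n2]|] //; have [Hte HC1] := IH _ _ _ _ _ HGx He E1.
  case: (fresh L te n2) (static_fresh te n2) => tr n3 /= Htr.
  case E2: sub => [Cs|] // [<- <- _].
  by rewrite static_t_fun Htx Htr !all_cat HC1 (static_wfc HG Htx) (static_wfc HGx Htr)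
    (static_sub_f HGx Hte Htr E2).
- move=> He; case E1: consM => [[[[//| y ty tr] C1] n1]|] //.
  have [] := IH _ _ _ _ _ HG He E1; rewrite static_t_fun => /andP [Hty Htr] HC1.
  case E2: lookup => [tx|] //; case E3: sub => [Cs|] // [<- <- _].
  by rewrite static_renT Htr all_cat HC1 (static_sub_f HG (static_lookup HG E2) Hty E3).
- case/andP => He1 He2; case: lookup => [[[] _|]|] //.
  case E1: consM => [[[t1 C1] n1]|] //; have [Ht1 HC1] := IH1 _ _ _ _ _ HG He1 E1.
  case E2: consM => [[[t2 C2] n2]|] //; have [Ht2 HC2] := IH2 _ _ _ _ _ HG He2 E2.
  case: (fresh L t1 n2) (static_fresh t1 n2) => tr n3 /= Htr.
  case E3: sub => [C3|] //; case E4: sub => [C4|] // [<- <- _].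
  by rewrite Htr !all_cat HC1 HC2 static_wfc // (static_sub_f HG Ht1 Htr E3)
    (static_sub_f HG Ht2 Htr E4).
- case/andP => He1 He2.
  case E1: consM => [[[t1 C1] n1]|] //; have [Ht1 HC1] := IH1 _ _ _ _ _ HG He1 E1.
  have HGx : static_env ((x, t1) :: G) by rewrite /= Ht1.
  case E2: consM => [[[t2 C2] n2]|] //; have [Ht2 HC2] := IH2 _ _ _ _ _ HGx He2 E2.
  case: (fresh L t2 n2) (static_fresh t2 n2) => tr n3 /= Htr.
  case E3: sub => [C3|] // [<- <- _].
  by rewrite Htr !all_cat HC1 HC2 static_wfc // (static_sub_f HGx Ht2 Htr E3).
- case/andP => /andP [Hta He1] He2.
  case E1: consM => [[[t1 C1] n1]|] //; have [Ht1 HC1] := IH1 _ _ _ _ _ HG He1 E1.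
  case Ea: sub => [Ca|] //.
  have HGx : static_env ((x, ta) :: G) by rewrite /= Hta.
  case E2: consM => [[[t2 C2] n2]|] //; have [Ht2 HC2] := IH2 _ _ _ _ _ HGx He2 E2.
  case: (fresh L t2 n2) (static_fresh t2 n2) => tr n3 /= Htr.
  case E3: sub => [C3|] // [<- <- _].
  by rewrite Htr !all_cat HC1 HC2 !static_wfc // (static_sub_f HG Ht1 Hta Ea)
    (static_sub_f HGx Ht2 Htr E3).
Qed.

(* [Defs.Cons] is qualified because [Cons] alone denotes the constructor of [seq]. *)
Lemma static_Cons (G : genv L) (e : expr L const) :
  static_env G -> static_e e -> all static_c (Defs.Cons cty G e).2.
Proof.
rewrite /Defs.Cons => HG He; case E: consM => [[[t C] n]|] //.
by case: (static_consM HG He E).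
Qed.

Lemma GInfer_static Q (G : genv L) (e : expr L const) t :
  static_env G -> static_e e -> GInfer cty G e Q t <-> Infer cty G e Q = Some t.
Proof.
move=> HG He; have := static_Cons HG He; rewrite /GInfer /Infer.
case: (Defs.Cons cty G e) => [[t0|] C] /= HC; last by split=> // -[? [? [? [? [[]]]]]].
split=> [[_ [_ [C' [A [[<- <-] [/(gamma_list_static _ _ HC) -> [-> ->]]]]]]] //|].
case EC: strip_list => [C'|] //; case ES: Solve => [A|] // [<-].
by exists t0, C, C', A; rewrite (gamma_list_static _ _ HC).
Qed.

End StaticConstraints.

Theorem mainTheorem2 (L : logic) (const : Type) (cty : const -> rty (formula L))
    (Q : seq (formula L)) (G : genv L) (e : expr L const) :
  static_env G -> static_e e ->
  (forall tau, Infer cty G e Q = Some tau ->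
     forall t, GInfer cty G e Q t <-> t = tau) /\
  (Infer cty G e Q = None -> forall t, ~ GInfer cty G e Q t).
Proof.
move=> HG He; split=> [tau Htau t | Hnone t]; rewrite GInfer_static //.
- by rewrite Htau; split=> [[]|->].
- by rewrite Hnone.
Qed.
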